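(* Let $m\in\mathbb{N}$ and let $L,M,N$ be nonempty subsets of $[m]$. Let $D=(1+u^2)D_1+u^2\big(D_2+(u+u^2)D_3\big)\subseteq\mathcal{R}^m$ where $D_1\in\{\Delta_L,\Delta_L^c\}$, $D_2\in\{\Delta_M,\Delta_M^c\}$, $D_3\in\{\Delta_N,\Delta_N^c\}$. Then the binary linear code $\Phi(C_D)$ is self-orthogonal (with respect to the Euclidean inner product on $\mathbb{Z}_2^{3|D|}$).
   Context: $\mathcal{R}=\mathbb{Z}_2[u]/\langle u^3-u\rangle$; every $x\in\mathcal{R}^n$ is uniquely $x=r+us+u^2t$ with $r,s,t\in\mathbb{Z}_2^n$, and $\mathbb{Z}_2^n\subseteq\mathcal{R}^n$. The Gray map $\Phi:\mathcal{R}^n\to\mathbb{Z}_2^{3n}$ is $\Phi(r+us+u^2t)=(r+s,\,s+t,\,t)$. $[m]=\{1,\dots,m\}$; for $X\subseteq[m]$, $\Delta_X=\{v\in\mathbb{Z}_2^m:\mathrm{Supp}(v)\subseteq X\}$ and $\Delta_X^c=\mathbb{Z}_2^m\setminus\Delta_X$. For $D_1,D_2,D_3\subseteq\mathbb{Z}_2^m$, $(1+u^2)D_1+u^2(D_2+(u+u^2)D_3)=\{(1+u^2)t_1+u^2t_2+u^2(u+u^2)t_3:t_i\in D_i\}\subseteq\mathcal{R}^m$. Given $D=\{d_1,\dots,d_n\}\subseteq\mathcal{R}^m$ (in a fixed order), $C_D=\{(v\cdot d_1,\dots,v\cdot d_n):v\in\mathcal{R}^m\}$ with $v\cdot d=\sum_i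 v_id_i$, and $\Phi(C_D)=\{\Phi(c):c\in C_D\}\subseteq\mathbb{Z}_2^{3n}$. A binary code $C$ is self-orthogonal if $C\subseteq C^\perp$. *)

From mathcomp Require Import all_boot all_order all_algebra.
Set Implicit Arguments.
Unset Strict Implicit.
Unset Printing Implicit Defensive.
Import GRing.Theory.
Local Open Scope ring_scope.

(* The ring R = Z_2[u]/<u^3 - u>.  An element r + u s + u^2 t (r,s,t in Z_2)
   is represented by the triple (r, s, t). *)
Definition Rel : Type := ('F_2 * 'F_2 * 'F_2)%type.

Definition rr (x : Rel) : 'F_2 := x.1.1.
Definition rs (x : Rel) : 'F_2 := x.1.2.
Definition rt (x : Rel) : 'F_2 := x.2.

Definition rzero : Rel := (0, 0, 0).
Definition radd (x y : Rel) : Rel := (rr x + rr y, rs x + rs y, rt x + rt y).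
(* (a0 + a1 u + a2 u^2)(b0 + b1 u + b2 u^2) using u^3 = u, u^4 = u^2 *)
Definition rmul (x y : Rel) : Rel :=
  (rr x * rr y,
   rr x * rs y + rs x * rr y + rs x * rt y + rt x * rs y,
   rr x * rt y + rt x * rr y + rs x * rs y + rt x * rt y).

Definition R_one_plus_u2 : Rel := (1, 0, 1).
Definition R_u2 : Rel := (0, 0, 1).
Definition R_u_plus_u2 : Rel := (0, 1, 1).

Definition bvec (m : nat) := {ffun 'I_m -> 'F_2}.
Definition rvec (m : nat) := {ffun 'I_m -> Rel}.

Definition inj_bvec m (v : bvec m) : rvec m := [ffun i => (v i, 0, 0)].
Definition rvadd m (v w : rvec m) : rvec m := [ffun i => radd (v i) (w i)].
Definition rvscale m (a : Rel) (v : rvec m) : rvec m := [ffun i => rmul a (v i)].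

Definition Delta m (X : {set 'I_m}) : {set bvec m} :=
  [set v : bvec m | [forall i, (v i != 0) ==> (i \in X)]].
Definition Deltac m (X : {set 'I_m}) : {set bvec m} := ~: Delta X.

(* (1+u^2) D1 + u^2 (D2 + (u+u^2) D3) *)
Definition Dset m (D1 D2 D3 : {set bvec m}) : {set rvec m} :=
  [set rvadd (rvscale R_one_plus_u2 (inj_bvec t.1.1))
             (rvscale R_u2 (rvadd (inj_bvec t.1.2)
                                  (rvscale R_u_plus_u2 (inj_bvec t.2))))
  | t in setX (setX D1 D2) D3].

Definition rdot m (v d : rvec m) : Rel := \big[radd/rzero]_(i < m) rmul (v i) (d i).

(* the codeword of C_D associated with v, D enumerated in a fixed order *)
Definition CD_word m (D : {set rvec m}) (v : rvec m) : seq Rel :=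
  [seq rdot v d | d <- enum D].

Definition Phi (c : seq Rel) : seq 'F_2 :=
  [seq rr x + rs x | x <- c] ++ [seq rs x + rt x | x <- c] ++ [seq rt x | x <- c].

Definition PhiCD m (D : {set rvec m}) (w : seq 'F_2) : Prop :=
  exists v : rvec m, w = Phi (CD_word D v).

Definition bdot (x y : seq 'F_2) : 'F_2 := \sum_(p <- zip x y) p.1 * p.2.

Definition dual_code (n : nat) (C : seq 'F_2 -> Prop) (y : seq 'F_2) : Prop :=
  size y = n /\ forall x, C x -> bdot x y = 0.

Definition self_orthogonal (n : nat) (C : seq 'F_2 -> Prop) : Prop :=
  forall x, C x -> dual_code n C x.

(* Since [d(a, b, c)] is additive in
   [(a, b, c)] and [Phi] is additive, the inner product of the images of two
   codewords is a sum, over [D1 x D2 x D3], of products of functions of the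
   form [f1 a + f2 b + f3 c].  Expanding, each term depends on at most two of
   [a], [b], [c], so summing over the missing variable multiplies it by one of
   [#|D1|], [#|D2|], [#|D3|].  These are even: translating by a unit vector
   [e_i], [i] in [X], is a fixed-point-free involution of [Z_2^m] that
   preserves [Delta_X], hence also its complement. *)
From mathcomp Require Import all_boot all_order all_algebra.
From mathcomp Require Import ring.
Set Implicit Arguments.
Unset Strict Implicit.
Import GRing.Theory.
Local Open Scope ring_scope.

Lemma even_card_involution (T : finType) (f : T -> T) (A : {set T}) :
  involutive f -> (forall x, f x != x) -> {mono f : x / x \in A} ->
  ~~ odd #|A|.
Proof.
move=> fK fx_neq fA; have [n] := ubnP #|A|.
elim: n A fA => // n IHn A fA; rewrite ltnS => leAn.
have [-> | [x xA]] := set_0Vmem A; first by rewrite cards0.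
have f_inj := inv_inj fK.
set A' := A :\: [set x; f x].
have fA' : {mono f : y / y \in A'}.
  move=> y; rewrite !inE fA (inj_eq f_inj) -{1}(fK x) (inj_eq f_inj).
  by rewrite orbC.
have cardA : #|A| = (#|A'| + 2)%N.
  rewrite -(cardsID [set x; f x] A) addnC; congr (_ + _)%N.
  have -> : A :&: [set x; f x] = [set x; f x].
    by apply/setIidPr/subsetP => y; rewrite !inE => /orP[]/eqP->; rewrite ?fA.
  by rewrite cards2 eq_sym fx_neq.
rewrite cardA oddD /= addbF; apply: IHn fA' _.
by apply: leq_trans leAn; rewrite cardA addn2.
Qed.

Lemma addrr_F2 (x : 'F_2) : x + x = 0.
Proof. by apply: addrr_pchar2; apply: pchar_Fp. Qed.

Lemma natr_F2_even (n : nat) : ~~ odd n -> n%:R = 0 :> 'F_2.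
Proof. by move=> /negbTE n_even; rewrite -(Fp_nat_mod (isT : prime 2)) modn2 n_even. Qed.

Lemma even_card_Delta m (X : {set 'I_m}) (D : {set bvec m}) :
  X != set0 -> D = Delta X \/ D = Deltac X -> ~~ odd #|D|.
Proof.
case/set0Pn=> i iX hD.
pose flip (v : bvec m) : bvec m := [ffun j => v j + (j == i)%:R].
have flipK : involutive flip.
  by move=> v; apply/ffunP => j; rewrite !ffunE -addrA addrr_F2 addr0.
have flip_neq v : flip v != v.
  apply/eqP => /ffunP/(_ i); rewrite ffunE eqxx => /eqP.
  by rewrite -subr_eq0 addrC addKr oner_eq0.
have flip_Delta : {mono flip : v / v \in Delta X}.
  move=> v; rewrite !inE; apply: eq_forallb => j; rewrite ffunE.
  by case: (eqVneq j i) => [->|_]; rewrite ?iX ?implybT ?addr0.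
apply: (@even_card_involution _ flip D flipK flip_neq).
by case: hD => -> // v; rewrite !in_setC flip_Delta.
Qed.

Section ThreeVariables.

Variables (R : comPzRingType) (T1 T2 T3 : Type).

Definition additively_separable (f : T1 -> T2 -> T3 -> R) :=
  exists f1 f2 f3, forall a b c, f a b c = f1 a + f2 b + f3 c.

Definition pairwise_decomposable (h : T1 -> T2 -> T3 -> R) :=
  exists phi psi chi, forall a b c, h a b c = phi a b + psi a c + chi b c.

Lemma pairwise_decomposableD (h k : T1 -> T2 -> T3 -> R) :
  pairwise_decomposable h -> pairwise_decomposable k ->
  pairwise_decomposable (fun a b c => h a b c + k a b c).
Proof.
move=> [phi [psi [chi hE]]] [phi' [psi' [chi' kE]]].
exists (fun a b => phi a b + phi' a b), (fun a c => psi a c + psi' a c).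
by exists (fun b c => chi b c + chi' b c) => a b c; rewrite hE kE; ring.
Qed.

Lemma additively_separable_mul (f g : T1 -> T2 -> T3 -> R) :
  additively_separable f -> additively_separable g ->
  pairwise_decomposable (fun a b c => f a b c * g a b c).
Proof.
move=> [f1 [f2 [f3 fE]]] [g1 [g2 [g3 gE]]].
exists (fun a b => (f1 a + f2 b) * (g1 a + g2 b)).
exists (fun a c => f1 a * g3 c + f3 c * g1 a + f3 c * g3 c).
by exists (fun b c => f2 b * g3 c + f3 c * g2 b) => a b c; rewrite fE gE; ring.
Qed.

End ThreeVariables.

Lemma sum_card_eq0 (R : pzRingType) (T : finType) (A : {set T}) (x : R) :
  #|A|%:R = 0 :> R -> \sum_(t in A) x = 0.
Proof. by move=> cardA; rewrite sumr_const -mulr_natr cardA mulr0. Qed.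

Lemma sum3_pairwise_decomposable (R : comPzRingType) (T1 T2 T3 : finType)
    (A1 : {set T1}) (A2 : {set T2}) (A3 : {set T3}) (h : T1 -> T2 -> T3 -> R) :
  #|A1|%:R = 0 :> R -> #|A2|%:R = 0 :> R -> #|A3|%:R = 0 :> R ->
  pairwise_decomposable h ->
  \sum_(a in A1) \sum_(b in A2) \sum_(c in A3) h a b c = 0.
Proof.
move=> cardA1 cardA2 cardA3 [phi [psi [chi hE]]].
have -> : \sum_(a in A1) \sum_(b in A2) \sum_(c in A3) h a b c =
    \sum_(a in A1) \sum_(b in A2) \sum_(c in A3) phi a b
  + \sum_(a in A1) \sum_(b in A2) \sum_(c in A3) psi a c
  + \sum_(a in A1) \sum_(b in A2) \sum_(c in A3) chi b c.
  rewrite -!big_split; apply: eq_bigr => a _; rewrite -!big_split.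
  apply: eq_bigr => b _; rewrite -!big_split; apply: eq_bigr => c _; exact: hE.
rewrite [X in X + _ + _]big1 => [|a _]; last by apply: big1 => b _; apply: sum_card_eq0.
rewrite [X in _ + X + _]big1 => [|a _]; last exact: sum_card_eq0.
by rewrite sum_card_eq0 // !add0r.
Qed.

Lemma big_setX (R : Type) (idx : R) (op : Monoid.com_law idx)
    (T1 T2 : finType) (A1 : {set T1}) (A2 : {set T2}) (F : T1 * T2 -> R) :
  \big[op/idx]_(t in setX A1 A2) F t =
  \big[op/idx]_(a in A1) \big[op/idx]_(b in A2) F (a, b).
Proof. by rewrite pair_big_dep; apply: eq_big => -[a b] //; rewrite in_setX. Qed.

Definition dvec m (t : bvec m * bvec m * bvec m) : rvec m :=
  rvadd (rvscale R_one_plus_u2 (inj_bvec t.1.1))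
        (rvscale R_u2 (rvadd (inj_bvec t.1.2) (rvscale R_u_plus_u2 (inj_bvec t.2)))).

Lemma dvecE m (a b c : bvec m) i : dvec (a, b, c) i = (a i, c i, a i + b i + c i).
Proof. by rewrite !ffunE /radd /rmul /rr /rs /rt /=; congr (_, _, _); ring. Qed.

Lemma dvec_inj m : injective (@dvec m).
Proof.
pose undvec (d : rvec m) : bvec m * bvec m * bvec m :=
  ([ffun i => rr (d i)], [ffun i => rt (d i) - rr (d i) - rs (d i)],
   [ffun i => rs (d i)]).
apply: (can_inj (g := undvec)) => -[[a b] c].
by congr (_, _, _); apply/ffunP => i; rewrite ffunE dvecE /rr /rs /rt /=; ring.
Qed.

Lemma sum_Dset m (R : nmodType) (D1 D2 D3 : {set bvec m}) (F : rvec m -> R) :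
  \sum_(d in Dset D1 D2 D3) F d =
  \sum_(a in D1) \sum_(b in D2) \sum_(c in D3) F (dvec (a, b, c)).
Proof. by rewrite (big_imset _ (in2W (@dvec_inj m))) !big_setX. Qed.

Lemma rmulDr (x y z : Rel) : rmul x (radd y z) = radd (rmul x y) (rmul x z).
Proof. by rewrite /rmul /radd /rr /rs /rt /=; congr (_, _, _); ring. Qed.

Lemma additively_separable_rdot_dvec (R : comPzRingType) (p : Rel -> R) m
    (v : rvec m) :
  {morph p : x y / radd x y >-> x + y} -> p rzero = 0 ->
  additively_separable (fun a b c => p (rdot v (dvec (a, b, c)))).
Proof.
move=> pD p0; exists (fun a => \sum_i p (rmul (v i) (a i, 0, a i))).
exists (fun b => \sum_i p (rmul (v i) (0, 0, b i))).
exists (fun c => \sum_i p (rmul (v i) (0, c i, c i))) => a b c.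
rewrite (big_morph p pD p0) -!big_split; apply: eq_bigr => i _ /=.
by rewrite dvecE -!pD -!rmulDr /radd /rr /rs /rt /= !addr0 !add0r.
Qed.

Definition gray1 (x : Rel) : 'F_2 := rr x + rs x.
Definition gray2 (x : Rel) : 'F_2 := rs x + rt x.

Definition gray_dot (x y : Rel) : 'F_2 :=
  gray1 x * gray1 y + gray2 x * gray2 y + rt x * rt y.

Lemma size_Phi (c : seq Rel) : size (Phi c) = (3 * size c)%N.
Proof. by rewrite !size_cat !size_map mulSn mul2n addnn. Qed.

Lemma bdot_Phi_map (T : Type) (f g : T -> Rel) (s : seq T) :
  bdot (Phi (map f s)) (Phi (map g s)) = \sum_(t <- s) gray_dot (f t) (g t).
Proof.
rewrite /bdot /Phi !zip_cat ?size_map // !big_cat -!map_comp !zip_map !big_map.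
by rewrite /= addrA -!big_split.
Qed.

Lemma pairwise_decomposable_gray_dot m (v w : rvec m) :
  pairwise_decomposable
    (fun a b c => gray_dot (rdot v (dvec (a, b, c))) (rdot w (dvec (a, b, c)))).
Proof.
have gray1D : {morph gray1 : x y / radd x y >-> x + y}.
  by move=> x y; rewrite /gray1 /= addrACA.
have gray2D : {morph gray2 : x y / radd x y >-> x + y}.
  by move=> x y; rewrite /gray2 /= addrACA.
have rtD : {morph rt : x y / radd x y >-> x + y} by [].
rewrite /gray_dot; apply: pairwise_decomposableD; first apply: pairwise_decomposableD.
all: apply: additively_separable_mul; apply: additively_separable_rdot_dvec => //.
all: by rewrite /gray1 /gray2 addr0.
Qed.

Theorem proposition4p3 (m : nat) (L M N : {set 'I_m})
  (hL : L != set0) (hM : M != set0) (hN : N != set0)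
  (D1 D2 D3 : {set bvec m})
  (h1 : D1 = Delta L \/ D1 = Deltac L)
  (h2 : D2 = Delta M \/ D2 = Deltac M)
  (h3 : D3 = Delta N \/ D3 = Deltac N) :
  self_orthogonal (3 * #|Dset D1 D2 D3|) (PhiCD (Dset D1 D2 D3)).
Proof.
move=> _ [v ->]; split; first by rewrite size_Phi size_map cardE.
move=> _ [w ->]; rewrite bdot_Phi_map big_enum /= sum_Dset.
apply: sum3_pairwise_decomposable; last exact: pairwise_decomposable_gray_dot.
- exact/natr_F2_even/(even_card_Delta hL h1).
- exact/natr_F2_even/(even_card_Delta hM h2).
- exact/natr_F2_even/(even_card_Delta hN h3).
Qed.
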